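(* Let $2\le n\le\infty$, $r\ge 0$, $p,q\in\mathbb Z$ and let $A$ be an $n$-multicomplex. Then the map $\pi_r\colon ZW_r^{p,q}(A)\to E_r^{p,q}(A)$, defined as the composite of $z_r\colon ZW_r^{p,q}(A)\to Z_r^{p,q}(A)$ (where $z_0=\mathrm{id}$ and $z_r(a_0,\dots,a_{r-1})=a_0$ for $r\ge1$) with the quotient map $Z_r^{p,q}(A)\to E_r^{p,q}(A)$, is surjective and satisfies $\ker\pi_r=\operatorname{im} w_r$, where $w_r\colon BW_r^{p,q-1}(A)\to ZW_r^{p,q}(A)$. Moreover $z_r\circ w_r=\beta_r$ lands in $B^{p,q}_r(A)$, where $\beta_0=0$, $\beta_1=d_0$ and for $r\ge2$, $\beta_r(b_0,\dots,b_{r-2};a;c_0,\dots,c_{r-2})=d_0a+\sum_{i=1}^{r-1}(-1)^id_ib_{r-1-i}$. Hence $E_r^{p,q}(A)\cong ZW_r^{p,q}(A)/w_r(BW_r^{p,q-1}(A))$, naturally in $A$, and under this isomorphism the differential $\Delta_r$ of $E_r$ corresponds to the well-defined map \[ [(a_0,\dots,a_{r-1})]\longmapsto \Big[\Big(\sum_{i=1}^r(-1)^id_{i+k}a_{r-i}\Big)_{k=0,\dots,r-1}\Big] \] from $ZW_r^{p,q}(A)/w_r(BW_r^{p,q-1}(A))$ to $ZW_r^{p-r,q+1-r}(A)/w_r(BW_r^{p-r,q-r}(A))$.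
   Context: Throughout, $R$ is a commutative unital ring. For $1\le n\le\infty$, an $n$-multicomplex is a $\mathbb Z\times\mathbb Z$-bigraded $R$-module $A=\{A^{p,q}\}$ with $R$-linear maps $d_i\colon A\to A$ ($i\ge0$) of bidegree $(-i,1-i)$ such that $\sum_{i+j=l}(-1)^id_id_j=0$ for all $l\ge0$, and $d_i=0$ for all $i\ge n$ (no vanishing condition when $n=\infty$). Morphisms are bidegree $(0,0)$ $R$-linear maps commuting with all $d_i$; the category is denoted $\mathrm{Ch}_n$. Spectral sequence: $Z_0^{p,q}(A)=A^{p,q}$; for $r\ge1$, $Z_r^{p,q}(A)$ is the set of $a_0\in A^{p,q}$ for which there exist $a_j\in A^{p-j,q-j}$ ($1\le j\le r-1$) with $\sum_{i+j=l}(-1)^id_ia_j=0$ for $0\le l\le r-1$. $B_0^{p,q}(A)=0$, $B_1^{p,q}(A)=A^{p,q}\cap\operatorname{im}d_0$, and for $r\ge2$, $B_r^{p,q}(A)$ is the set of $x\in A^{p,q}$ for which there exist $b_i\in A^{p+r-1-i,q+r-2-i}$ ($0\le i\le r-1$) with $x=\sum_{i=0}^{r-1}(-1)^id_ib_{r-1-i}$ and $\sum_{i=0}^l(-1)^id_ib_{l-i}=0$ for $0\le l\le r-2$. Then $E_r^{p,q}(A)=Z_r^{p,q}(A)/B_r^{p,q}(A)$ with differential $\Delta_r[a_0]=[\sum_{i=1}^r(-1)^id_ia_{r-i}]$ (with $a_j$ as in the definition of $Z_r$). Witness cycles: $ZW_0^{p,q}(A)=A^{p,q}$; for $r\ge1$,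 $ZW_r^{p,q}(A)$ is the $R$-module of tuples $(a_0,\dots,a_{r-1})$ with $a_i\in A^{p-i,q-i}$ and $\sum_{i+j=l}(-1)^id_ia_j=0$ for $0\le l\le r-1$. Witness boundaries: $BW_0^{p,q-1}(A)=0$, $BW_1^{p,q-1}(A)=A^{p,q-1}$, and for $r\ge2$, $BW_r^{p,q-1}(A)=ZW_{r-1}^{p+r-1,q+r-2}(A)\oplus A^{p,q-1}\oplus ZW_{r-1}^{p-1,q-1}(A)$, with elements written $(b_0,\dots,b_{r-2};a;c_0,\dots,c_{r-2})$. The map $w_r\colon BW_r^{p,q-1}(A)\to ZW_r^{p,q}(A)$ is $w_0=0$, $w_1=d_0$, and for $r\ge2$ its $j$-th component ($0\le j\le r-1$) is \[ w_r(\underline b;a;\underline c)_j=d_ja+(-1)^j\sum_{i=j+1}^{r+j-1}(-1)^id_ib_{r+j-1-i}+c_{j-1},\qquad c_{-1}:=0. \] *)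

From HB Require Import structures.
From mathcomp Require Import all_boot all_order all_algebra.
Set Implicit Arguments. Unset Strict Implicit. Unset Printing Implicit Defensive.
Import Order.TTheory GRing.Theory Num.Theory.
Local Open Scope ring_scope.

(* Encoding of a bigraded R-module {A^{p,q}}: an ambient R-module M together
   with a family of submodules A^{p,q} of M (for a genuine bigraded module take
   M = (+)_{p,q} A^{p,q}).  The bound n is [Some n] (finite)
   or [None] (n = infinity). *)

Record multicomplex (R : comPzRingType) (n : option nat) (M : lmodType R) := Multicomplex {
  piece : int -> int -> {pred M};
  piece_closed : forall p q, GRing.submod_closed (piece p q);
  dd : nat -> {linear M -> M};
  dd_deg : forall (i : nat) p q x, x \in piece p q ->
      dd i x \in piece (p - i%:Z) (q + 1 - i%:Z);
  dd_rel : forall (l : nat) p q x, x \in piece p q ->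
      \sum_(i < l.+1) (-1) ^+ i *: dd i (dd (l - i)%N x) = 0;
  dd_vanish : match n with
              | Some m => forall (i : nat) p q x, (m <= i)%N -> x \in piece p q -> dd i x = 0
              | None => True
              end
}.

Arguments piece {R n M}.
Arguments dd {R n M}.

Definition n_ge2 (n : option nat) : Prop :=
  match n with Some m => (2 <= m)%N | None => True end.

Section Spectral.
Variables (R : comPzRingType) (n : option nat) (M : lmodType R) (A : multicomplex n M).

Local Notation A_ := (piece A).
Local Notation d := (dd A).

Definition Zr (r : nat) (p q : int) (x : M) : Prop :=
  x \in A_ p q /\
  (r = 0%N \/
   exists a : nat -> M, a 0%N = x /\
     (forall j : nat, (1 <= j < r)%N -> a j \in A_ (p - j%:Z) (q - j%:Z)) /\
     (forall l : nat, (l < r)%N ->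
        \sum_(i < l.+1) (-1) ^+ i *: d i (a (l - i)%N) = 0)).

Definition Br (r : nat) (p q : int) (x : M) : Prop :=
  match r with
  | 0 => x = 0
  | 1 => x \in A_ p q /\ exists y, y \in A_ p (q - 1) /\ d 0%N y = x
  | _ => x \in A_ p q /\
         exists b : nat -> M,
           (forall i : nat, (i < r)%N ->
              b i \in A_ (p + r%:Z - 1 - i%:Z) (q + r%:Z - 2 - i%:Z)) /\
           x = \sum_(i < r) (-1) ^+ i *: d i (b (r - 1 - i)%N) /\
           (forall l : nat, (l <= r - 2)%N ->
              \sum_(i < l.+1) (-1) ^+ i *: d i (b (l - i)%N) = 0)
  end.

(* ZW_r^{p,q}(A): an element is represented by a sequence a : nat -> M;
   for r = 0 only a 0 matters (ZW_0 = A^{p,q}); for r >= 1 the entries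
   a 0, ..., a (r-1) form the tuple (a_0,...,a_{r-1}). *)
Definition ZW (r : nat) (p q : int) (a : nat -> M) : Prop :=
  match r with
  | 0 => a 0%N \in A_ p q
  | _ => (forall i : nat, (i < r)%N -> a i \in A_ (p - i%:Z) (q - i%:Z)) /\
       (forall l : nat, (l < r)%N ->
          \sum_(i < l.+1) (-1) ^+ i *: d i (a (l - i)%N) = 0)
  end.

Definition zwlen (r : nat) : nat := maxn r 1.

Definition zr (a : nat -> M) : M := a 0%N.

(* BW_r^{p,q-1}(A): elements (b_0..b_{r-2}; a; c_0..c_{r-2}) represented
   by triples ((b, a), c).  BW_0 = 0 (all triples represent 0), BW_1 = A^{p,q-1}. *)
Definition BWt := ((nat -> M) * M * (nat -> M))%type.

Definition BW (r : nat) (p q : int) (t : BWt) : Prop :=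
  let: (b, x, c) := t in
  match r with
  | 0 => True
  | 1 => x \in A_ p (q - 1)
  | _ => ZW r.-1 (p + r%:Z - 1) (q + r%:Z - 2) b /\ x \in A_ p (q - 1) /\
         ZW r.-1 (p - 1) (q - 1) c
  end.

Definition wr (r : nat) (t : BWt) (j : nat) : M :=
  let: (b, x, c) := t in
  if r == 0%N then 0
  else d j x
       + (-1) ^+ j *: \sum_(j.+1 <= i < r + j) (-1) ^+ i *: d i (b (r + j - 1 - i)%N)
       + (if j == 0%N then 0 else c j.-1).

Definition betar (r : nat) (t : BWt) : M :=
  let: (b, x, c) := t in
  if r == 0%N then 0
  else d 0%N x + \sum_(1 <= i < r) (-1) ^+ i *: d i (b (r - 1 - i)%N).

(* the candidate differential on ZW_r / w_r(BW_r) *)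
Definition Phir (r : nat) (a : nat -> M) (k : nat) : M :=
  \sum_(1 <= i < r.+1) (-1) ^+ i *: d (i + k)%N (a (r - i)%N).

(* representative of Delta_r [a_0] computed from the witnesses a *)
Definition Deltarep (r : nat) (a : nat -> M) : M :=
  \sum_(1 <= i < r.+1) (-1) ^+ i *: d i (a (r - i)%N).

End Spectral.

Definition mc_morph (R : comPzRingType) (n : option nat) (M M' : lmodType R)
  (A : multicomplex n M) (A' : multicomplex n M') (f : {linear M -> M'}) : Prop :=
  (forall p q x, x \in piece A p q -> f x \in piece A' p q) /\
  (forall (i : nat) p q x, x \in piece A p q -> f (dd A i x) = dd A' i (f x)).

Definition mapBWt (R : comPzRingType) (M M' : lmodType R) (f : M -> M')
  (t : BWt M) : BWt M' :=
  let: (b, x, c) := t in (fun j => f (b j), f x, fun j => f (c j)).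

(* With (D u)_l = sum_(i <= l) (-1)^i d_i u_(l-i), the multicomplex relations say
   D (j |-> d_j x) = 0, and ZW_r is the set of u with (D u)_l = 0 for l < r. The key
   identity: if (D u)_l = 0 for l < N then D (Phi_N u) = 0 entirely, because regrouping
   D (Phi_N u) with the relations leaves only terms d_(l+1+v) (D u)_(N-1-v).
   Now w_r(b; x; c)_j = d_j x + (Phi_(r-1) b)_j + c_(j-1), so w_r lands in ZW_r; B_r
   consists of the d_0 x + (Phi_(r-1) b)_0 with b in ZW_(r-1), and an element of ZW_r
   with such a 0-th entry is w_r(b; x; c) with c read off from its other entries; and
   Phi_r maps w_r(b; x; c) to w_r(c; -W_r; c') with W = d x + Phi_(r-1) b. *)

From HB Require Import structures.
From mathcomp Require Import all_boot all_order all_algebra zify.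
Import Order.TTheory GRing.Theory Num.Theory.
Local Open Scope ring_scope.

HB.instance Definition _ (R : comPzRingType) (n : option nat) (M : lmodType R)
    (A : multicomplex n M) (p q : int) :=
  GRing.isSubmodClosed.Build R M (piece A p q) (piece_closed A p q).

Lemma sign_eq_mod2 (R : pzRingType) a b k :
  a = (b + k * 2)%N -> (-1) ^+ a = (-1) ^+ b :> R.
Proof. by move=> ->; rewrite exprD exprM sqrr_sign mulr1. Qed.

Lemma sum_triangle (V : nmodType) (G : nat -> nat -> V) N :
  \sum_(m < N) \sum_(v < m.+1) G m v = \sum_(v < N) \sum_(w < N - v) G (v + w)%N v.
Proof.
elim: N => [|N IH]; first by rewrite !big_ord0.
rewrite big_ord_recr /= IH [in RHS]big_ord_recr /= subSnn big_ord1 addn0.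
rewrite big_ord_recr /= addrA; congr (_ + _).
rewrite -big_split /=; apply: eq_bigr => v _.
rewrite subSn; last exact: ltnW (ltn_ord v).
by rewrite big_ord_recr /= subnKC // ltnW.
Qed.

Section Multicomplex.
Set Implicit Arguments. Unset Strict Implicit.
Variables (R : comPzRingType) (n : option nat) (M : lmodType R) (A : multicomplex n M).
Local Notation d := (dd A).
Local Notation P := (piece A).

Lemma piece_cast p q p' q' x : x \in P p q -> p = p' -> q = q' -> x \in P p' q'.
Proof. by move=> h <- <-. Qed.

Lemma dd_piece (i : nat) p q p' q' x :
  x \in P p q -> p' = p - i%:Z -> q' = q + 1 - i%:Z -> d i x \in P p' q'.
Proof. by move=> h -> ->; apply: dd_deg. Qed.

Definition Dtot (u : nat -> M) (l : nat) : M :=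
  \sum_(i < l.+1) (-1) ^+ i *: d i (u (l - i)%N).

Definition shift (c : nat -> M) (j : nat) : M := if j == 0%N then 0 else c j.-1.

Lemma Dtot_eq u v l : (forall j, (j <= l)%N -> u j = v j) -> Dtot u l = Dtot v l.
Proof. by move=> h; apply: eq_bigr => -[i hi] _ /=; rewrite h // leq_subr. Qed.

Lemma DtotD u v l : Dtot (fun j => u j + v j) l = Dtot u l + Dtot v l.
Proof. by rewrite /Dtot -big_split; apply: eq_bigr => i _; rewrite linearD scalerDr. Qed.

Lemma DtotB u v l : Dtot (fun j => u j - v j) l = Dtot u l - Dtot v l.
Proof. by rewrite /Dtot -sumrB; apply: eq_bigr => i _; rewrite linearB scalerBr. Qed.

Lemma Dtot_dd p q x l : x \in P p q -> Dtot (fun j => d j x) l = 0.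
Proof. exact: dd_rel. Qed.

Lemma Dtot_shift0 c : Dtot (shift c) 0 = 0.
Proof. by rewrite /Dtot big_ord1 /shift /= linear0 scaler0. Qed.

Lemma Dtot_shiftS c l : Dtot (shift c) l.+1 = Dtot c l.
Proof.
rewrite /Dtot big_ord_recr /= subnn /shift /= linear0 scaler0 addr0.
by apply: eq_bigr => -[i hi] _ /=; rewrite subSn.
Qed.

Definition ZWpos (r : nat) (p q : int) (a : nat -> M) : Prop :=
  (forall i, (i < r)%N -> a i \in P (p - i%:Z) (q - i%:Z)) /\
  (forall l, (l < r)%N -> Dtot a l = 0).

Lemma ZWposE r p q a : (0 < r)%N -> ZW A r p q a = ZWpos r p q a.
Proof. by case: r. Qed.

Definition BWpos (r : nat) (p q : int) (b : nat -> M) (x : M) (c : nat -> M) :=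
  [/\ x \in P p (q - 1), ZWpos r.-1 (p + r%:Z - 1) (q + r%:Z - 2) b
    & ZWpos r.-1 (p - 1) (q - 1) c].

Lemma BWposE r p q b x c : (0 < r)%N -> BW A r p q (b, x, c) <-> BWpos r p q b x c.
Proof.
case: r => [|[|r]] //= _; last by split=> [[? []]|[]].
by split=> [hx|[]//]; split=> //; split.
Qed.

Lemma dd_rel_split p q K l y : y \in P p q ->
  \sum_(i < l.+1) (-1) ^+ i *: d i (d (K + l - i)%N y) =
  - \sum_(v < K) (-1) ^+ (l.+1 + v) *: d (l.+1 + v) (d (K - 1 - v)%N y).
Proof.
move=> hy; have := dd_rel (K + l) hy.
rewrite (_ : (K + l).+1 = l.+1 + K)%N; last by lia.
rewrite big_split_ord /= => /eqP; rewrite addr_eq0 => /eqP ->.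
congr (- _); apply: eq_bigr => v _; congr (_ *: d _ (d _ _)); lia.
Qed.

Lemma Phir_piece N p q u k :
  (forall s, (s < N)%N -> u s \in P (p - s%:Z) (q - s%:Z)) ->
  Phir A N u k \in P (p - N%:Z - k%:Z) (q + 1 - N%:Z - k%:Z).
Proof.
move=> hu; rewrite /Phir big_add1 /= big_mkord; apply: rpred_sum => -[i hi] _ /=.
have hs : (N - i.+1 < N)%N by lia.
by apply/rpredZ/(dd_piece (hu _ hs)); lia.
Qed.

Lemma Dtot_Phir N p q u : ZWpos N p q u -> forall l, Dtot (Phir A N u) l = 0.
Proof.
move=> [hu hD] l; rewrite /Dtot /Phir.
pose G m v := - ((-1) ^+ m.+1 * (-1) ^+ (l.+1 + v))
  *: d (l.+1 + v) (d (m - v)%N (u (N - m.+1)%N)).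
transitivity (\sum_(m < N) \sum_(v < m.+1) G m v).
  transitivity (\sum_(i < l.+1) \sum_(m < N)
     ((-1) ^+ m.+1 *: ((-1) ^+ i *: d i (d (m.+1 + l - i)%N (u (N - m.+1)%N))))).
    apply: eq_bigr => i _.
    rewrite big_add1 /= big_mkord linear_sum scaler_sumr; apply: eq_bigr => m _.
    rewrite linearZ /= scalerA mulrC -scalerA; congr (_ *: (_ *: d _ (d _ _))).
    by rewrite addnBA // -ltnS.
  rewrite exchange_big /=; apply: eq_bigr => m _.
  have hm : (N - m.+1 < N)%N by have := ltn_ord m; lia.
  rewrite -scaler_sumr (dd_rel_split _ _ (hu _ hm)) scalerN scaler_sumr -sumrN.
  by apply: eq_bigr => v _; rewrite /G scalerA -scaleNr; congr (_ *: d _ (d _ _)); lia.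
(* after regrouping, the terms with a fixed outer index v assemble d_(l+1+v) (D u)_(N-1-v) *)
rewrite sum_triangle big1 // => -[v hv] _ /=.
transitivity (\sum_(w < (N - v.+1).+1)
   (- (-1) ^+ l) *: d (l.+1 + v) ((-1) ^+ w *: d w (u (N - v.+1 - w)%N))).
  rewrite -subSn //; apply: eq_bigr => -[w hw] _ /=.
  rewrite /G linearZ /= scalerA addKn; congr (_ *: d _ (d _ (u _))); last lia.
  by rewrite mulNr -!exprD; congr (- _); apply: (sign_eq_mod2 _ _ _ v.+1); lia.
rewrite -scaler_sumr -linear_sum.
have hNv : (N - v.+1 < N)%N by lia.
by have := hD _ hNv; rewrite /Dtot => ->; rewrite linear0 scaler0.
Qed.

Lemma wrE r b x c j : (0 < r)%N ->
  wr A r (b, x, c) j = d j x + Phir A r.-1 b j + shift c j.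
Proof.
case: r => // r _; rewrite /wr /= /Phir /shift; congr (_ + _ + _).
rewrite -[j.+1]add1n big_addn addnK scaler_sumr big_add1 [RHS]big_add1 /=.
apply: eq_bigr => i _; rewrite scalerA; congr (_ *: d _ (b _)); last lia.
by rewrite -exprD; apply: (sign_eq_mod2 _ _ _ j); lia.
Qed.

Lemma Dtot_wr r p q p' q' b x c l : (0 < r)%N -> x \in P p q ->
  ZWpos r.-1 p' q' b -> Dtot (wr A r (b, x, c)) l = Dtot (shift c) l.
Proof.
move=> hr hx hb; rewrite (Dtot_eq (v := fun j => d j x + Phir A r.-1 b j + shift c j));
  last by move=> j _; rewrite wrE.
by rewrite !DtotD (Dtot_dd _ hx) (Dtot_Phir hb) !add0r.
Qed.

Lemma Phir_pred_piece r p q b j : (0 < r)%N ->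
  ZWpos r.-1 (p + r%:Z - 1) (q + r%:Z - 2) b -> Phir A r.-1 b j \in P (p - j%:Z) (q - j%:Z).
Proof. by move=> hr [hb _]; apply: piece_cast (Phir_piece _ hb) _ _; lia. Qed.

Lemma wr_piece r p q b x c j : (0 < r)%N -> BWpos r p q b x c -> (j < r)%N ->
  wr A r (b, x, c) j \in P (p - j%:Z) (q - j%:Z).
Proof.
move=> hr [hx hb [hc _]] hj; rewrite wrE // !rpredD //.
- by apply: dd_piece hx _ _; lia.
- exact: Phir_pred_piece.
- by case: j hj => [|j] hj; rewrite /shift ?rpred0 //; apply: piece_cast (hc j _) _ _; lia.
Qed.

Lemma wr_ZWpos r p q b x c : (0 < r)%N -> BWpos r p q b x c -> ZWpos r p q (wr A r (b, x, c)).
Proof.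
move=> hr hbw; split=> [j hj|l hl]; first exact: wr_piece.
have [hx hb [_ hc]] := hbw; rewrite (Dtot_wr _ _ hr hx hb).
by case: l hl => [|l] hl; rewrite ?Dtot_shift0 ?Dtot_shiftS ?hc //; lia.
Qed.

Lemma ZWpos_wr r p q a b x : (0 < r)%N -> ZWpos r p q a -> x \in P p (q - 1) ->
  ZWpos r.-1 (p + r%:Z - 1) (q + r%:Z - 2) b -> a 0%N = d 0%N x + Phir A r.-1 b 0%N ->
  exists c, BWpos r p q b x c /\ forall j, (j < r)%N -> a j = wr A r (b, x, c) j.
Proof.
move=> hr [ha hDa] hx hb ha0.
pose c k := a k.+1 - (d k.+1 x + Phir A r.-1 b k.+1).
have hac j : (j < r)%N -> a j = wr A r (b, x, c) j.
  by rewrite wrE // /shift; case: j => [|j] _ /=; rewrite ?addr0 // /c addrC subrK.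
exists c; split=> //; split=> //; split=> [k hk|l hl].
  rewrite rpredB //; first by apply: piece_cast (ha k.+1 _) _ _; lia.
  rewrite rpredD //; first by apply: dd_piece hx _ _; lia.
  by apply: piece_cast (Phir_pred_piece _ hr hb) _ _; lia.
rewrite -Dtot_shiftS -(Dtot_wr _ _ hr hx hb) -(hDa l.+1); last lia.
by apply: Dtot_eq => j hj; rewrite hac //; lia.
Qed.

Lemma Dtot_Phir0 r (b : nat -> M) : Dtot b r = d 0%N (b r) + Phir A r b 0%N.
Proof.
rewrite /Dtot big_ord_recl /= subn0 expr0 scale1r /Phir big_add1 big_mkord.
by congr (_ + _); apply: eq_bigr => i _; rewrite addn0.
Qed.

Lemma betarE r b x c : (0 < r)%N -> betar A r (b, x, c) = d 0%N x + Phir A r.-1 b 0%N.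
Proof.
case: r => // r _; rewrite /betar /Phir /=; congr (_ + _).
by apply: eq_bigr => i _; rewrite addn0 subn1.
Qed.

Lemma zr_wr r t : zr (wr A r t) = betar A r t.
Proof.
case: t => [[b x] c]; case: r => [|r]; first by rewrite /zr /wr /betar.
by rewrite /zr wrE // betarE // /shift addr0.
Qed.

Lemma BrE r p q y : (0 < r)%N -> Br A r p q y <->
  exists b x, [/\ x \in P p (q - 1), ZWpos r.-1 (p + r%:Z - 1) (q + r%:Z - 2) b
                & y = d 0%N x + Phir A r.-1 b 0%N].
Proof.
have Phir0 (b : nat -> M) : Phir A 0 b 0%N = 0 by rewrite /Phir big_geq.
case: r => // -[|r] _ /=.
  split=> [[_ [x [hx <-]]]|[b [x [hx _ ->]]]].
    by exists (fun _ => 0), x; split=> //; rewrite Phir0 addr0.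
  rewrite Phir0 addr0; split; last by exists x.
  by apply: dd_piece hx _ _; lia.
split=> [[_ [b [hb [-> hD]]]]|[b [x [hx [hb hD] ->]]]].
  exists b, (b r.+1); split.
  - by apply: piece_cast (hb r.+1 _) _ _; lia.
  - by split=> [i hi|l hl]; [apply: hb | apply: hD]; lia.
  - by rewrite -Dtot_Phir0; apply: eq_bigr => i _; rewrite subn1.
split.
  rewrite rpredD //; first by apply: dd_piece hx _ _; lia.
  by apply: piece_cast (Phir_piece _ hb) _ _; lia.
pose b' i := if i == r.+1 then x else b i.
exists b'; split; [|split].
- move=> i hi; rewrite /b'; case: eqP => [->|/eqP ne]; first by apply: piece_cast hx _ _; lia.
  by apply: hb; lia.
- rewrite (eq_bigr (fun i : 'I_r.+2 => (-1) ^+ i *: d i (b' (r.+1 - i)%N))); last first.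
    by move=> i _; rewrite subn1.
  rewrite -/(Dtot b' r.+1) Dtot_Phir0 /b' eqxx /Phir; congr (_ + _).
  by apply: eq_big_nat => i hi; rewrite ifN //; apply/eqP; lia.
- move=> l hl; transitivity (Dtot b l); last by apply: hD; lia.
  by apply: eq_bigr => -[i hi] _ /=; rewrite /b' ifN //; apply/eqP; lia.
Qed.

Lemma Br0 r p q : Br A r p q 0.
Proof.
have dd_sum0 (N : nat) (F : 'I_N -> R) (G : 'I_N -> nat) :
    \sum_(i < N) F i *: d (G i) 0 = 0.
  by rewrite big1 // => i _; rewrite linear0 scaler0.
case: r => [|r] //; apply/BrE => //; exists (fun _ => 0), 0; split.
- exact: rpred0.
- by split=> [i _|l _]; [exact: rpred0 | exact: dd_sum0].
- by rewrite linear0 add0r /Phir big_add1 big_mkord dd_sum0.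
Qed.

Lemma ZW_Zr r p q a : ZW A r p q a -> Zr A r p q (zr a).
Proof.
case: r => [|r] /=; first by split=> //; left.
move=> [ha hDa]; split; first by apply: piece_cast (ha 0%N _) _ _ => //; lia.
by right; exists a; split=> //; split=> [j hj|]; [apply: ha; lia | exact: hDa].
Qed.

Lemma Zr_lift r p q x : Zr A r p q x -> exists a, ZW A r p q a /\ Br A r p q (zr a - x).
Proof.
case: r => [|r] [hx]; first by exists (fun _ => x); rewrite /zr subrr.
case=> // -[a [ha0 [ha hDa]]]; exists a; rewrite /zr ha0 subrr; split; last exact: Br0.
split=> // -[|i] hi; last exact: ha.
by rewrite ha0; apply: piece_cast hx _ _; lia.
Qed.

Lemma wr_ZW r p q t : BW A r p q t -> ZW A r p q (wr A r t).
Proof.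
case: t => [[b x] c]; case: r => [_|r]; first exact: rpred0.
by rewrite BWposE // ZWposE //; apply: wr_ZWpos.
Qed.

Lemma betar_Br r p q t : BW A r p q t -> zr (wr A r t) = betar A r t /\ Br A r p q (betar A r t).
Proof.
case: t => [[b x] c] hbw; rewrite zr_wr; split=> //; case: r hbw => [|r] //.
rewrite BWposE // => -[hx hb _]; apply/BrE => //.
by exists b, x; rewrite betarE.
Qed.

Lemma Br_zr_im_wr r p q a : ZW A r p q a ->
  Br A r p q (zr a) <-> exists t, BW A r p q t /\ forall j, (j < zwlen r)%N -> a j = wr A r t j.
Proof.
case: r => [|r] ha.
  rewrite /zr /=; split=> [ha0|[[[b x] c] [_ /(_ 0%N isT) ->]]] //.
  by exists ((fun _ => 0), 0, (fun _ => 0)); split=> // -[|j] //= _; rewrite ha0.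
rewrite /zwlen (maxn_idPl (isT : (1 <= r.+1)%N)).
split=> [|[t [ht ha_wr]]]; last by have [<- hBr] := betar_Br ht; rewrite /zr ha_wr.
rewrite BrE // => -[b [x [hx hb ha0]]]; rewrite ZWposE // in ha.
have [c [hbw ha_wr]] := ZWpos_wr (ltn0Sn r) ha hx hb ha0.
by exists (b, x, c); rewrite BWposE.
Qed.

Lemma PhirD N u v k : Phir A N (fun j => u j + v j) k = Phir A N u k + Phir A N v k.
Proof. by rewrite /Phir -big_split; apply: eq_bigr => i _; rewrite linearD scalerDr. Qed.

Lemma Phir_shift r c : Phir A r.+1 (shift c) 0%N = Phir A r c 0%N.
Proof.
rewrite /Phir big_nat_recr //= subnn /shift /= linear0 scaler0 addr0.
apply: eq_big_nat => i /andP[_ hi]; rewrite ifN; last by apply/eqP; lia.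
by congr (_ *: d _ (c _)); lia.
Qed.

Lemma Phir_ZWpos r p q a : ZWpos r p q a -> ZWpos r (p - r%:Z) (q + 1 - r%:Z) (Phir A r a).
Proof. by move=> ha; split=> [k _|l _]; [exact: Phir_piece ha.1 | exact: Dtot_Phir ha l]. Qed.

(* In (Phi_r w_r(b; x; c))_0 the entries W_j contribute d_0 (-W_r), since (D W)_r = 0,
   and the entries c_(j-1) contribute (Phi_(r-1) c)_0. *)
Lemma Phir_wr r p q b x c : (0 < r)%N -> BWpos r p q b x c ->
  let W j := d j x + Phir A r.-1 b j in
  exists c', BWpos r (p - r%:Z) (q + 1 - r%:Z) c (- W r) c' /\
    forall k, (k < r)%N -> Phir A r (wr A r (b, x, c)) k = wr A r (c, - W r, c') k.
Proof.
case: r => // r _ hbw W; have [hx hb [hc hDc]] := hbw.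
apply: ZWpos_wr => //.
- by apply: Phir_ZWpos; apply: wr_ZWpos.
- rewrite rpredN rpredD //; first by apply: dd_piece hx _ _; lia.
  by apply: piece_cast (Phir_pred_piece _ _ hb) _ _; lia.
- by split=> [k hk|l hl]; [apply: piece_cast (hc k hk) _ _; lia | exact: hDc].
have hW : Dtot W r.+1 = 0.
  by rewrite DtotD (Dtot_dd _ hx) (Dtot_Phir hb) addr0.
rewrite (_ : Phir A r.+1 _ 0%N = Phir A r.+1 (fun j => W j + shift c j) 0%N); last first.
  by apply: eq_bigr => i _; rewrite wrE.
rewrite PhirD Phir_shift linearN; congr (_ + _).
by apply/eqP; rewrite -addr_eq0 addrC -Dtot_Phir0 hW.
Qed.

Lemma Phir_ZW r p q a : (0 < r)%N ->
  ZW A r p q a -> ZW A r (p - r%:Z) (q + 1 - r%:Z) (Phir A r a).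
Proof. by move=> hr; rewrite !ZWposE //; apply: Phir_ZWpos. Qed.

Lemma Phir_im_wr r p q t : (0 < r)%N -> BW A r p q t ->
  exists t', BW A r (p - r%:Z) (q + 1 - r%:Z) t' /\
    forall k, (k < r)%N -> Phir A r (wr A r t) k = wr A r t' k.
Proof.
case: t => [[b x] c] hr; rewrite BWposE // => hbw.
have [c' [hbw' Phir_wr_eq]] := Phir_wr hr hbw.
by exists (c, - (d r x + Phir A r.-1 b r), c'); rewrite BWposE.
Qed.

Lemma Phir_eq N u v k : (forall j, (j < N)%N -> u j = v j) -> Phir A N u k = Phir A N v k.
Proof. by move=> h; apply: eq_big_nat => i /andP[hi0 hiN]; rewrite h //; lia. Qed.

Lemma PhirB N u v k : Phir A N (fun j => u j - v j) k = Phir A N u k - Phir A N v k.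
Proof. by rewrite /Phir -sumrB; apply: eq_bigr => i _; rewrite linearB scalerBr. Qed.

Lemma ZWposB r p q a a' :
  ZWpos r p q a -> ZWpos r p q a' -> ZWpos r p q (fun j => a j - a' j).
Proof.
move=> [ha hDa] [ha' hDa']; split=> [i hi|l hl]; first by rewrite rpredB ?ha ?ha'.
by rewrite DtotB hDa ?hDa' ?subr0.
Qed.

Lemma Phir_Deltarep r p q a a' : (0 < r)%N -> ZW A r p q a -> ZW A r p q a' ->
  Br A r p q (zr a - zr a') ->
  Br A r (p - r%:Z) (q + 1 - r%:Z) (zr (Phir A r a) - Deltarep A r a').
Proof.
move=> hr ha ha' hB.
have he : ZW A r p q (fun j => a j - a' j).
  by move: ha ha'; rewrite !ZWposE //; apply: ZWposB.
have [t [ht he_wr]] := (Br_zr_im_wr he).1 hB.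
rewrite /zwlen (maxn_idPl hr) in he_wr.
have [t' [ht' Phir_wr_eq]] := Phir_im_wr hr ht.
have [zr_wr_t' Br_t'] := betar_Br ht'.
suff -> : zr (Phir A r a) - Deltarep A r a' = betar A r t' by [].
rewrite -zr_wr_t' /zr -Phir_wr_eq // -(Phir_eq _ he_wr) PhirB.
by congr (_ - _); apply: eq_bigr => i _; rewrite addn0.
Qed.

End Multicomplex.

Section Naturality.
Set Implicit Arguments. Unset Strict Implicit.
Variables (R : comPzRingType) (n : option nat) (M M' : lmodType R).
Variables (A : multicomplex n M) (A' : multicomplex n M') (f : {linear M -> M'}).
Hypothesis hf : mc_morph A A' f.

Lemma map_piece p q x : x \in piece A p q -> f x \in piece A' p q.
Proof. exact: hf.1. Qed.

Lemma map_dd i p q x : x \in piece A p q -> f (dd A i x) = dd A' i (f x).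
Proof. exact: hf.2. Qed.

Lemma map_Dtot u l : (forall i, (i <= l)%N -> exists p q, u i \in piece A p q) ->
  f (Dtot A u l) = Dtot A' (fun j => f (u j)) l.
Proof.
move=> hu; rewrite /Dtot linear_sum; apply: eq_bigr => -[i hi] _ /=.
by have [p [q hpq]] := hu (l - i)%N (leq_subr _ _); rewrite linearZ /= (map_dd _ hpq).
Qed.

Lemma map_Phir N u k : (forall s, (s < N)%N -> exists p q, u s \in piece A p q) ->
  f (Phir A N u k) = Phir A' N (fun j => f (u j)) k.
Proof.
move=> hu; rewrite /Phir linear_sum; apply: eq_big_nat => i /andP[hi0 hiN].
by have [p [q hpq]] := hu (N - i)%N ltac:(lia); rewrite linearZ /= (map_dd _ hpq).
Qed.

Lemma map_ZWpos r p q a : ZWpos A r p q a -> ZWpos A' r p q (fun j => f (a j)).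
Proof.
move=> [ha hDa]; split=> [i hi|l hl]; first exact: map_piece (ha i hi).
rewrite -map_Dtot ?hDa ?linear0 // => i hi.
by exists (p - i%:Z), (q - i%:Z); apply: ha; lia.
Qed.

Lemma ZW_map r p q a : ZW A r p q a -> ZW A' r p q (fun j => f (a j)).
Proof. by case: r => [|r]; [exact: map_piece | rewrite !ZWposE //; exact: map_ZWpos]. Qed.

Lemma Br_map r p q x : Br A r p q x -> Br A' r p q (f x).
Proof.
case: r => [/= ->|r]; first exact: linear0.
rewrite !BrE // => -[b [x0 [hx hb ->]]].
exists (fun j => f (b j)), (f x0); split; [exact: map_piece | exact: map_ZWpos |].
rewrite linearD (map_dd _ hx) map_Phir // => s hs.
by case: hb => hb _; exists (p + r.+1%:Z - 1 - s%:Z), (q + r.+1%:Z - 2 - s%:Z); apply: hb.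
Qed.

Lemma BW_map r p q t : BW A r p q t ->
  BW A' r p q (mapBWt f t) /\ forall j, f (wr A r t j) = wr A' r (mapBWt f t) j.
Proof.
case: t => [[b x] c]; case: r => [|r]; first by split=> // j; rewrite /wr /= linear0.
rewrite [mapBWt _ _]/= !BWposE // => -[hx hb hc].
split; first by split; [exact: map_piece | exact: map_ZWpos ..].
move=> j; rewrite !wrE // !linearD (map_dd _ hx) map_Phir; last first.
  by case: hb => hb _ s hs; do 2 eexists; apply: hb.
by congr (_ + _); case: j => [|j]; rewrite /shift /= ?linear0.
Qed.

End Naturality.

Theorem mainTheorem1 (R : comPzRingType) (n : option nat) (hn : n_ge2 n)
  (M : lmodType R) (A : multicomplex n M) (r : nat) (p q : int) :
  [/\
   (forall a, ZW A r p q a -> Zr A r p q (zr a)),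
   (forall x, Zr A r p q x -> exists a, ZW A r p q a /\ Br A r p q (zr a - x)),
   (forall t, BW A r p q t -> ZW A r p q (wr A r t)),
   (forall a, ZW A r p q a ->
      (Br A r p q (zr a) <->
       exists t, BW A r p q t /\ forall j, (j < zwlen r)%N -> a j = wr A r t j))
  & (forall t, BW A r p q t -> zr (wr A r t) = betar A r t /\ Br A r p q (betar A r t))]
  /\
   ((1 <= r)%N ->
     [/\ (forall a, ZW A r p q a -> ZW A r (p - r%:Z) (q + 1 - r%:Z) (Phir A r a)),
         (forall t, BW A r p q t ->
            exists t', BW A r (p - r%:Z) (q + 1 - r%:Z) t' /\
                       forall k, (k < r)%N -> Phir A r (wr A r t) k = wr A r t' k)
       & (forall a a', ZW A r p q a -> ZW A r p q a' -> Br A r p q (zr a - zr a') ->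
            Br A r (p - r%:Z) (q + 1 - r%:Z) (zr (Phir A r a) - Deltarep A r a'))])
  /\
   (forall (M' : lmodType R) (A' : multicomplex n M') (f : {linear M -> M'}),
      mc_morph A A' f ->
      [/\ (forall a, ZW A r p q a -> ZW A' r p q (fun j => f (a j))),
          (forall x, Br A r p q x -> Br A' r p q (f x))
        & (forall t, BW A r p q t ->
             BW A' r p q (mapBWt f t) /\
             forall j, f (wr A r t j) = wr A' r (mapBWt f t) j)]).
Proof.
split.
  by split=> [a|x|t|a|t]; [exact: ZW_Zr | exact: Zr_lift | exact: wr_ZW
                          | exact: Br_zr_im_wr | exact: betar_Br].
split=> [hr|M' A' f hf].
  by split=> [a|t|a a']; [exact: Phir_ZW | exact: Phir_im_wr | exact: Phir_Deltarep].
by split=> [a|x|t]; [exact: ZW_map | exact: Br_map | exact: BW_map].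
Qed.
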